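(* Every free-connex conjunctive query without self-joins has the head-domination property.
   Context: A conjunctive query (CQ) without self-joins is $Q(\mathbf{A}) :- R_1(\mathbb{A}_1), \ldots, R_m(\mathbb{A}_m)$ with pairwise distinct relation symbols, $\mathrm{attr}(R_i)=\mathbb{A}_i$, $\mathrm{attr}(Q)=\bigcup_i\mathbb{A}_i$, output attributes $\mathrm{head}(Q)=\mathbf{A}$, $\mathrm{head}(R_i)=\mathrm{head}(Q)\cap\mathrm{attr}(R_i)$. $Q$ is acyclic if there is a tree whose nodes are in one-to-one correspondence with the relations of $Q$ such that for every attribute $A\in\mathrm{attr}(Q)$, the nodes whose relations contain $A$ form a connected subtree. $Q$ is free-connex if $Q$ is acyclic and the CQ obtained by adding to $Q$ one further relation whose attribute set is exactly $\mathrm{head}(Q)$ is also acyclic. $G^\exists_Q$ has as vertices the relations with $\mathrm{attr}(R_i)\setminus\mathrm{head}(Q)\neq\emptyset$ and an edge between $R_i,R_j$ if $(\mathrm{attr}(R_i)\cap\mathrm{attr}(R_j))\setminus\mathrm{head}(Q)\neq\emptyset$. A relation $R_i$ of $Q$ is dominant for a set $E$ of relations if $\bigcup_{R_j\in E}\mathrm{head}(R_j)\subseteq\mathrm{head}(R_i)$. $Q$ has the head-domination property if for every connected component $E$ of $G^\exists_Q$ some relation of $Q$ is dominant for $E$. *)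

From mathcomp Require Import all_boot.
Set Implicit Arguments. Unset Strict Implicit. Unset Printing Implicit Defensive.

(* A self-join-free CQ is given by a finite index type [I] of (pairwise
   distinct) relation symbols, a finite type [A] of attributes, the attribute
   set [att i] of each relation, and the set [head] of output attributes. *)

Definition is_tree (I : finType) (e : rel I) : Prop :=
  [/\ symmetric e, irreflexive e,
      (forall x y : I, connect e x y) &
      (forall s : seq I, uniq s -> 3 <= size s -> ~~ cycle e s)].

Definition induces_connected (I : finType) (e : rel I) (S : {set I}) : Prop :=
  forall x y, x \in S -> y \in S ->
    connect [rel u v | [&& e u v, u \in S & v \in S]] x y.

Definition acyclic (A I : finType) (att : I -> {set A}) : Prop :=
  exists e : rel I, is_tree e /\
    forall a : A, induces_connected e [set i | a \in att i].

(* The query extended by one further relation (index [None]) whose attribute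
   set is exactly head(Q). *)
Definition att_with_head (A I : finType) (att : I -> {set A}) (head : {set A})
  : option I -> {set A} :=
  fun o => if o is Some i then att i else head.

Definition free_connex (A I : finType) (att : I -> {set A}) (head : {set A})
  : Prop :=
  acyclic att /\ acyclic (att_with_head att head).

Definition headR (A I : finType) (att : I -> {set A}) (head : {set A}) (i : I)
  : {set A} := head :&: att i.

Definition gex_vertex (A I : finType) (att : I -> {set A}) (head : {set A})
  (i : I) : bool := att i :\: head != set0.

Definition gex_edge (A I : finType) (att : I -> {set A}) (head : {set A})
  : rel I :=
  fun i j => [&& gex_vertex att head i, gex_vertex att head j &
                 (att i :&: att j) :\: head != set0].

Definition gex_component (A I : finType) (att : I -> {set A}) (head : {set A})
  (i : I) : {set I} := [set j | connect (gex_edge att head) i j].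

Definition dominant (A I : finType) (att : I -> {set A}) (head : {set A})
  (k : I) (E : {set I}) : Prop :=
  \bigcup_(j in E) headR att head j \subset headR att head k.

Definition head_domination (A I : finType) (att : I -> {set A})
  (head : {set A}) : Prop :=
  forall i : I, gex_vertex att head i ->
    exists k : I, dominant att head k (gex_component att head i).

(* Let T be a join tree of the query extended by a head relation R_h.  Removing
   R_h splits T into subtrees, each attached to R_h by exactly one node (T has
   no cycles).  Relations sharing an existential attribute are joined by a path
   of T avoiding R_h, which contains no existential attribute, so a whole
   component E of G^exists_Q lies in one such subtree.  A head attribute a of
   a relation in E is carried along the path from that relation to R_h, so it
   belongs to the node where this path enters R_h: the attaching node of the
   subtree, which therefore dominates E.  If E has no head attributes at all,
   any relation dominates it. *)
From mathcomp Require Import all_boot.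
Set Implicit Arguments. Unset Strict Implicit. Unset Printing Implicit Defensive.

Lemma connect_homo (T T' : finType) (f : T -> T') (e : rel T) (e' : rel T') :
  {homo f : x y / e x y >-> connect e' x y} ->
  {homo f : x y / connect e x y >-> connect e' x y}.
Proof.
move=> fe x _ /connectP [p ep ->]; elim: p x ep => [|y p IHp] x /=.
  by rewrite connect0.
by case/andP=> /fe exy /IHp; apply: connect_trans.
Qed.

Section TreeMinusVertex.
Variables (T : finType) (e : rel T) (r : T).

Definition induced (S : {set T}) : rel T :=
  [rel u v | [&& e u v, u \in S & v \in S]].

Definition avoid : rel T := [rel u v | [&& e u v, u != r & v != r]].

Lemma avoid_sym : symmetric e -> symmetric avoid.
Proof.
move=> esym u v; rewrite /avoid /= esym.
by case: (e v u) (u != r) (v != r) => [] [] [].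
Qed.

Lemma connect_induced_avoid (S : {set T}) :
  r \notin S -> subrel (connect (induced S)) (connect avoid).
Proof.
move=> rS; apply: connect_sub => u v /and3P [euv uS vS]; apply: connect1.
by rewrite /avoid /= euv !(memPn rS).
Qed.

Lemma path_avoid_neq x p : path avoid x p -> {in p, forall y, y != r}.
Proof.
elim: p x => [|z p IHp] x //= /andP [/and3P [_ _ zr] /IHp pr] y.
by rewrite inE => /predU1P [-> | /pr].
Qed.

Lemma connect_induced_root (S : {set T}) x :
  x != r -> connect (induced S) x r ->
  exists k, [/\ e k r, k \in S & connect avoid x k].
Proof.
move=> xr /connectP [p + rl]; elim: p x xr rl => [|y p IHp] x xr /=.
  by move=> xe; rewrite xe eqxx in xr.
move=> yl /andP [/and3P [exy xS yS] yp]; have [yr | yr] := eqVneq y r.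
  by exists x; split; rewrite -?yr ?connect0.
have [k [ekr kS yk]] := IHp y yr yl yp; exists k; split => //.
by apply: connect_trans yk; apply: connect1; rewrite /avoid /= exy xr yr.
Qed.

(* A shortest [avoid]-path between two distinct neighbours of [r], closed up
   through [r], would be a cycle of the tree. *)
Lemma tree_avoid_neighbor_unique k1 k2 :
  is_tree e -> e k1 r -> e k2 r -> connect avoid k1 k2 -> k1 = k2.
Proof.
case=> esym eirr _ nocycle ek1 ek2 /connectP [p pp def_k2]; subst k2.
have [// | neq] := eqVneq k1 (last k1 p); exfalso.
case: (shortenP pp) ek2 neq => q qp uq _ ek2 neq.
have k1r : k1 != r by apply: contraTneq ek1 => ->; rewrite eirr.
have rq : r \notin k1 :: q.
  rewrite inE negb_or eq_sym k1r /=.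
  by apply/negP => /(path_avoid_neq qp); rewrite eqxx.
apply: (negP (nocycle (r :: k1 :: q) _ _)).
- by rewrite cons_uniq rq.
- by case: q {qp uq rq ek2} neq => [|? ?] //=; rewrite eqxx.
rewrite /cycle /= rcons_path esym ek1 ek2 andbT.
by apply: (sub_path _ qp) => u v /andP [].
Qed.

End TreeMinusVertex.

Section JoinTreeWithHead.
Variables (A I : finType) (att : I -> {set A}) (head : {set A}).
Variable e : rel (option I).
Hypothesis e_tree : is_tree e.
Hypothesis e_join :
  forall a : A, induces_connected e [set o | a \in att_with_head att head o].

Local Notation avoidN := (avoid e None).

Lemma gex_edge_avoid j1 j2 :
  gex_edge att head j1 j2 -> connect avoidN (Some j1) (Some j2).
Proof.
case/and3P=> _ _ /set0Pn [a]; rewrite !inE => /and3P [ah aj1 aj2].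
apply: (connect_induced_avoid (S := [set o | a \in att_with_head att head o])).
  by rewrite inE.
by apply: e_join; rewrite inE.
Qed.

Lemma gex_component_avoid i j :
  j \in gex_component att head i -> connect avoidN (Some i) (Some j).
Proof.
by rewrite inE; apply: (connect_homo (f := Some)); apply: gex_edge_avoid.
Qed.

Lemma headR_attaching_node j a :
  a \in headR att head j ->
  exists k, [/\ e (Some k) None, a \in att k & connect avoidN (Some j) (Some k)].
Proof.
rewrite /headR inE => /andP [ah aj].
have := @e_join a (Some j) None; rewrite !inE => /(_ aj ah).
case/connect_induced_root => // -[k|] [ekN].
  by rewrite inE => ak jk; exists k.
by case: e_tree => _ /(_ None) /negP.
Qed.

Lemma attaching_node_dominant i k :
  e (Some k) None -> connect avoidN (Some i) (Some k) ->
  dominant att head k (gex_component att head i).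
Proof.
move=> ekN ik; have [e_sym _ _ _] := e_tree.
have avoid_symN := sym_connect_sym (avoid_sym None e_sym).
apply/subsetP => a /bigcupP [j jE aj].
have [k' [ek'N ak' jk']] := headR_attaching_node aj.
suff -> : k = k' by rewrite /headR inE (setIP aj).1.
apply: Some_inj; apply: (tree_avoid_neighbor_unique e_tree ekN ek'N).
rewrite avoid_symN in ik; apply: connect_trans ik _.
exact: connect_trans (gex_component_avoid jE) jk'.
Qed.

End JoinTreeWithHead.

Theorem lemma19 (A I : finType) (att : I -> {set A}) (head : {set A}) :
  head \subset \bigcup_(i : I) att i ->
  free_connex att head -> head_domination att head.
Proof.
move=> _ [_ [e [e_tree e_join]]] i _.
have [/exists_inP [j jE /set0Pn [a aj]] | /exists_inPn no_heads] :=
  boolP [exists j in gex_component att head i, headR att head j != set0].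
  have [k [ekN _ jk]] := headR_attaching_node e_tree e_join aj.
  exists k; apply: (attaching_node_dominant e_tree e_join ekN).
  exact: connect_trans (gex_component_avoid e_join jE) jk.
exists i; apply/subsetP => a /bigcupP [j /no_heads].
by rewrite negbK => /eqP ->; rewrite inE.
Qed.
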